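(* Let $\mathrm{SG}(n)$ denote the Sprague--Grundy value of a pile of $n$ tokens in the game $i\textsc{-Mark}(\{1\},\{2,3\})$. For every integer $n>1$ there exists an integer $i$ with $1\le i\le 10$ and $i\le n$ such that $\mathrm{SG}(n-i)=1$.
   Context: In the impartial game $i\textsc{-Mark}(\{1\},\{2,3\})$, played on a single pile of $n\ge0$ tokens, a move replaces $n$ by $n-1$ (if $n\ge 1$), or by $n/2$ if $n>0$ is even, or by $n/3$ if $n>0$ is divisible by $3$. The Sprague--Grundy value is defined recursively by $\mathrm{SG}(n)=\mathrm{mex}\{\mathrm{SG}(w): w \text{ an option of } n\}$, where $\mathrm{mex}(T)$ is the smallest nonnegative integer not in $T$. *)

From mathcomp Require Import all_boot.
Set Implicit Arguments. Unset Strict Implicit. Unset Printing Implicit Defensive.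

Definition mex (T : seq nat) : nat := find (fun k => k \notin T) (iota 0 (size T).+1).

Definition options (n : nat) : seq nat :=
  (if 0 < n then [:: n.-1] else [::]) ++
  (if (0 < n) && (2 %| n) then [:: n %/ 2] else [::]) ++
  (if (0 < n) && (3 %| n) then [:: n %/ 3] else [::]).

(* Sprague-Grundy recursion with fuel; every option of n is < n,
   so fuel n.+1 suffices for the exact value. *)
Fixpoint sg_fuel (fuel n : nat) : nat :=
  match fuel with
  | 0 => 0
  | f.+1 => mex (map (sg_fuel f) (options n))
  end.

Definition SG (n : nat) : nat := sg_fuel n.+1 n.

(* Suppose SG avoids the value 1 on the block 6t+1, ..., 6t+5.  The positions
   6t+1 and 6t+5 have a single option, so their value is 0.  Then 6t+2 and 6t+4
   have value at least 2, so each has an option of value 1; since 6t+1 has value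
   0 and 6t+3 is in the block, these options are 3t+1 and 3t+2.  But 3t+1 is an
   option of 3t+2, so they cannot both have value 1.  Every window of ten
   positions below n > 11 contains such a block. *)

From mathcomp Require Import all_boot.
From mathcomp Require Import zify.

Lemma mex_has_gap (T : seq nat) : has (fun k => k \notin T) (iota 0 (size T).+1).
Proof.
apply/hasPn => /= covered.
have /uniq_leq_size : {subset iota 0 (size T).+1 <= T}.
  by move=> k /covered; rewrite negbK.
by rewrite iota_uniq size_iota ltnn => /(_ isT).
Qed.

Lemma mex_le_size (T : seq nat) : mex T <= size T.
Proof. by rewrite -ltnS -[X in _ < X](size_iota 0) -has_find mex_has_gap. Qed.

Lemma mex_notin (T : seq nat) : mex T \notin T.
Proof.
have := nth_find 0 (mex_has_gap T); rewrite nth_iota ?add0n //.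
by rewrite -[X in _ < X](size_iota 0) -has_find mex_has_gap.
Qed.

Lemma mem_mex (T : seq nat) k : k < mex T -> k \in T.
Proof.
move=> k_lt; have /negbFE := before_find 0 k_lt.
by rewrite nth_iota ?add0n // ltnS (leq_trans (ltnW k_lt)) ?mex_le_size.
Qed.

Lemma options_lt n o : o \in options n -> o < n.
Proof.
rewrite /options !mem_cat.
case: (posnP n) => [->|n_gt0] //=; rewrite !inE.
case/orP=> [/eqP->|]; first by lia.
by case/orP; case: ifP => // _; rewrite inE => /eqP->; lia.
Qed.

Lemma predn_in_options n : 0 < n -> n.-1 \in options n.
Proof. by move=> n_gt0; rewrite /options n_gt0 mem_cat mem_head. Qed.

Lemma options_coprime6 n : ~~ (2 %| n) -> ~~ (3 %| n) -> options n = [:: n.-1].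
Proof.
move=> n_odd n_not3; have n_gt0 : 0 < n by case: n n_odd n_not3.
by rewrite /options n_gt0 (negbTE n_odd) (negbTE n_not3).
Qed.

Lemma options_even_not3 n :
  2 %| n -> ~~ (3 %| n) -> options n = [:: n.-1; n %/ 2].
Proof.
move=> n_even n_not3; have n_gt0 : 0 < n by case: n n_even n_not3.
by rewrite /options n_gt0 n_even (negbTE n_not3).
Qed.

Lemma sg_fuel_SG f n : n < f -> sg_fuel f n = SG n.
Proof.
elim/ltn_ind: f n => [[|f] IH] n n_lt //.
rewrite /SG /=; congr mex; apply/eq_in_map => o /options_lt o_lt.
by rewrite (IH n) // (IH f) //; lia.
Qed.

Lemma SG_rec n : SG n = mex (map SG (options n)).
Proof.
rewrite {1}/SG /=; congr mex; apply/eq_in_map => o /options_lt o_lt.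
exact: sg_fuel_SG.
Qed.

Lemma SG_option_neq n o : o \in options n -> SG o != SG n.
Proof.
move=> o_opt; apply: contraNneq (mex_notin (map SG (options n))).
by rewrite -SG_rec => <-; apply: map_f.
Qed.

Lemma SG_succ_neq n : SG n != SG n.+1.
Proof. exact/SG_option_neq/(predn_in_options n.+1). Qed.

Lemma SG_option_of_lt n k : k < SG n -> exists2 o, o \in options n & SG o = k.
Proof. by rewrite SG_rec => /mem_mex /mapP [o o_opt ->]; exists o. Qed.

Lemma SG_coprime6 n : ~~ (2 %| n) -> ~~ (3 %| n) -> SG n = (SG n.-1 == 0).
Proof.
by move=> n_odd n_not3; rewrite SG_rec options_coprime6 //=; case: (SG n.-1) => [|[]].
Qed.

Lemma SG_half_eq1 n :
  2 %| n -> ~~ (3 %| n) -> 1 < SG n -> SG n.-1 != 1 -> SG (n %/ 2) = 1.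
Proof.
move=> n_even n_not3 /SG_option_of_lt [o].
by rewrite options_even_not3 // !inE => /orP [] /eqP -> // ->.
Qed.

Lemma SG_one_in_block t : has (fun m => SG m == 1) (iota (6 * t).+1 5).
Proof.
apply/negPn/negP => /hasPn no_one.
have SG_ne1 k : 0 < k < 6 -> SG (6 * t + k) != 1.
  by move=> k_range; apply: no_one; rewrite mem_iota; lia.
have SG1 : SG (6 * t + 1) = 0.
  by move: (SG_ne1 1 isT); rewrite SG_coprime6; [case: (_ == 0) | lia | lia].
have SG4_ne0 : SG (6 * t + 4) != 0.
  move: (SG_ne1 5 isT); rewrite SG_coprime6; try lia.
  by rewrite (_ : (6 * t + 5).-1 = 6 * t + 4); [case: (_ == 0) | lia].
have SG31 : SG (3 * t + 1) = 1.
  have := SG_succ_neq (6 * t + 1); rewrite -addnS SG1 => SG2_ne0.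
  rewrite (_ : 3 * t + 1 = (6 * t + 2) %/ 2); last lia.
  apply: SG_half_eq1; try lia.
    by move: (SG_ne1 2 isT) SG2_ne0; lia.
  by rewrite (_ : (6 * t + 2).-1 = 6 * t + 1) ?SG1; last lia.
have SG32 : SG (3 * t + 2) = 1.
  rewrite (_ : 3 * t + 2 = (6 * t + 4) %/ 2); last lia.
  apply: SG_half_eq1; try lia.
    by move: (SG_ne1 4 isT) SG4_ne0; lia.
  by rewrite (_ : (6 * t + 4).-1 = 6 * t + 3); [apply: SG_ne1 | lia].
by have := SG_succ_neq (3 * t + 1); rewrite -addnS SG31 SG32.
Qed.

Theorem mainTheorem5 (n : nat) : 1 < n ->
  exists i : nat, [/\ 1 <= i, i <= 10, i <= n & SG (n - i) = 1].
Proof.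
move=> n_gt1; have [n_le11|n_gt11] := leqP n 11.
  by exists n.-1; split; try lia; rewrite (_ : n - n.-1 = 1) //; lia.
have /hasP [m] := SG_one_in_block ((n - 6) %/ 6).
rewrite mem_iota => m_block /eqP SGm.
by exists (n - m); split; try lia; rewrite subKn ?SGm //; lia.
Qed.
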